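(* Let $u(x,t)$ be sufficiently smooth in $x$ (with bounded derivatives), $h>0$, and define the operators $$\mathscr L_1=\frac{1}{h^2}\Big(1-\frac1{90}\delta_x^4\Big)^{-1}\delta_x^2\Big(1-\frac1{12}\delta_x^2\Big),\qquad \mathscr L_2=\frac{1}{h^2}\Big(1+\frac1{560}\delta_x^6\Big)^{-1}\delta_x^2\Big(1-\frac1{12}\delta_x^2+\frac1{90}\delta_x^4\Big).$$ Then $$\frac{\partial^2u(x_j,t_k)}{\partial x^2}=\mathscr L_1u(x_j,t_k)+O(h^6)\quad\text{and}\quad \frac{\partial^2u(x_j,t_k)}{\partial x^2}=\mathscr L_2u(x_j,t_k)+O(h^8).$$
   Context: $\delta_x$ is the centered difference in $x$ with step $h$: $\delta_x u(x,t)=u(x+\frac h2,t)-u(x-\frac h2,t)$, so $\delta_x^2u(x,t)=u(x+h,t)-2u(x,t)+u(x-h,t)$, and $\delta_x^{2m}=(\delta_x^2)^m$. The operators act on functions of $x$ (with $t$ fixed), and $x_j=jh$, $t_k$ are grid points; the inverses $(1-\frac1{90}\delta_x^4)^{-1}$, $(1+\frac1{560}\delta_x^6)^{-1}$ are understood as the inverses of these difference operators (e.g. by their convergent Neumann series on bounded functions). *)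

From Stdlib Require Import Reals.
From Coquelicot Require Import Coquelicot.
Open Scope R_scope.

Definition d2 (h : R) (f : R -> R) : R -> R :=
  fun x => f (x + h) - 2 * f x + f (x - h).

(* delta_x^(2m) = (delta_x^2)^m *)
Fixpoint d2pow (h : R) (m : nat) (f : R -> R) : R -> R :=
  match m with
  | O => f
  | S m' => d2 h (d2pow h m' f)
  end.

(* (1 - 1/90 delta^4)^{-1} g, via its Neumann series sum_n (1/90)^n delta^{4n} g *)
Definition inv1 (h : R) (g : R -> R) : R -> R :=
  fun x => Series (fun n => (1/90)^n * d2pow h (2 * n) g x).

(* (1 + 1/560 delta^6)^{-1} g, via its Neumann series sum_n (-1/560)^n delta^{6n} g *)
Definition inv2 (h : R) (g : R -> R) : R -> R :=
  fun x => Series (fun n => (-(1/560))^n * d2pow h (3 * n) g x).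

Definition L1 (h : R) (f : R -> R) : R -> R :=
  fun x => / h^2 * inv1 h (d2 h (fun y => f y - /12 * d2 h f y)) x.

Definition L2 (h : R) (f : R -> R) : R -> R :=
  fun x => / h^2 * inv2 h (d2 h (fun y => f y - /12 * d2 h f y + /90 * d2pow h 2 f y)) x.

(* Taylor expansion of the stencils gives, for w := h^2 u_xx,
     delta^2 (1 - delta^2/12) u = (1 - delta^4/90) w + O(h^8),
     delta^2 (1 - delta^2/12 + delta^4/90) u = (1 + delta^6/560) w + O(h^10).
   Since |delta^2 g| <= 4 sup |g|, the Neumann series defining the inverses converge with ratio
   16/90 resp. 64/560 < 1, so applying them recovers w up to the same orders; dividing by h^2
   gives the errors O(h^6) and O(h^8). *)

From Stdlib Require Import Reals Lra.
From Coquelicot Require Import Coquelicot.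
Open Scope R_scope.

Definition smooth (f : R -> R) := forall n x, ex_derive_n f n x.

Lemma smooth_comp_opp f : smooth f -> smooth (fun y => f (- y)).
Proof.
  intros Hf [|n] x; [exact I|]; simpl.
  apply ex_derive_ext with (fun s => (-1) ^ n * Derive_n f n (- s)).
  { intros s; symmetry; apply Derive_n_comp_opp, filter_forall; intros; apply Hf. }
  apply ex_derive_scal, (ex_derive_comp (Derive_n f n) Ropp).
  - apply (Hf (S n)).
  - auto_derive; exact I.
Qed.

Lemma smooth_Derive_n f p : smooth f -> smooth (Derive_n f p).
Proof.
  intros Hf [|n] x; [exact I|]; simpl.
  apply ex_derive_ext with (Derive_n f (n + p)).
  { intros; symmetry; apply Derive_n_comp. }
  apply (Hf (S (n + p))).
Qed.

Definition taylor_poly (f : R -> R) (n : nat) (x a : R) :=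
  sum_f_R0 (fun m => a ^ m / INR (Factorial.fact m) * Derive_n f m x) n.

Lemma Lagrange_remainder_le c F D M k : 1 <= F -> Rabs D <= M ->
  Rabs (c ^ k / F * D) <= M * Rabs c ^ k.
Proof.
  intros HF HD.
  rewrite Rabs_mult, Rabs_div, <- RPow_abs, (Rabs_pos_eq F) by lra.
  assert (0 <= Rabs c ^ k) by (apply pow_le, Rabs_pos).
  assert (/ F <= 1) by (rewrite <- Rinv_1; apply Rinv_le_contravar; lra).
  assert (0 <= / F) by (apply Rlt_le, Rinv_0_lt_compat; lra).
  unfold Rdiv; rewrite (Rmult_comm M).
  apply Rmult_le_compat; auto using Rmult_le_pos, Rabs_pos.
  rewrite <- (Rmult_1_r (Rabs c ^ k)) at 2; auto using Rmult_le_compat_l.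
Qed.

Lemma taylor_poly_comp_opp f n x a : smooth f ->
  taylor_poly (fun y => f (- y)) n (- x) (- a) = taylor_poly f n x a.
Proof.
  intros Hf; apply sum_eq; intros m _.
  rewrite Derive_n_comp_opp, Ropp_involutive by (apply filter_forall; intros; apply Hf).
  replace (- a) with (-1 * a) by ring.
  rewrite Rpow_mult_distr.
  assert (Hsq : (-1) ^ m * (-1) ^ m = 1)
    by (rewrite <- Rpow_mult_distr, <- pow1 with m; f_equal; ring).
  unfold Rdiv; rewrite <- (Rmult_1_l (a ^ m)) at 2; rewrite <- Hsq; ring.
Qed.

Lemma taylor_poly_0 f n x : taylor_poly f n x 0 = f x.
Proof.
  unfold taylor_poly; induction n as [|n IH]; simpl; [field|].
  rewrite IH; unfold Rdiv; ring.
Qed.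

Lemma taylor_remainder_le_pos f n M x a : smooth f -> 0 < a ->
  (forall y, Rabs (Derive_n f (S n) y) <= M) ->
  Rabs (f (x + a) - taylor_poly f n x a) <= M * Rabs a ^ S n.
Proof.
  intros Hf Ha HM.
  destruct (Taylor_Lagrange f n x (x + a)) as [z [_ ->]]; [lra| intros; apply Hf |].
  replace (x + a - x) with a by ring; unfold taylor_poly.
  match goal with |- Rabs (?S + ?E - ?S) <= _ => replace (S + E - S) with E by ring end.
  apply Lagrange_remainder_le; auto.
  apply (le_INR 1), Factorial.lt_O_fact.
Qed.

(* [Taylor_Lagrange] only handles positive steps; negative ones go through [y |-> f (- y)]. *)
Lemma taylor_remainder_le f n M x a : smooth f ->
  (forall y, Rabs (Derive_n f (S n) y) <= M) ->
  Rabs (f (x + a) - taylor_poly f n x a) <= M * Rabs a ^ S n.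
Proof.
  intros Hf HM.
  destruct (Rtotal_order a 0) as [Ha|[->|Ha]]; [| |now apply taylor_remainder_le_pos].
  - rewrite <- taylor_poly_comp_opp, <- (Rabs_Ropp a) by exact Hf.
    replace (f (x + a)) with ((fun y => f (- y)) (- x + - a)) by (f_equal; ring).
    apply (taylor_remainder_le_pos (fun y => f (- y))); [now apply smooth_comp_opp | lra |].
    intros y; rewrite Derive_n_comp_opp by (apply filter_forall; intros; apply Hf).
    rewrite Rabs_mult, <- RPow_abs, Rabs_m1, pow1, Rmult_1_l; apply HM.
  - rewrite taylor_poly_0, Rplus_0_r, Rminus_diag, Rabs_R0, pow_ne_zero, Rmult_0_r
      by discriminate.
    apply Rle_refl.
Qed.

Lemma taylor_expansion_pm f n M x a : smooth f ->
  (forall y, Rabs (Derive_n f (S n) y) <= M) ->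
  exists r s, f (x + a) = taylor_poly f n x a + r /\ f (x - a) = taylor_poly f n x (- a) + s
    /\ Rabs r <= M * Rabs a ^ S n /\ Rabs s <= M * Rabs a ^ S n.
Proof.
  intros Hf HM.
  exists (f (x + a) - taylor_poly f n x a), (f (x - a) - taylor_poly f n x (- a)).
  split; [ring|]; split; [ring|]; split; [now apply taylor_remainder_le|].
  rewrite <- (Rabs_Ropp a); now apply taylor_remainder_le.
Qed.

Ltac eval_factorials :=
  repeat match goal with |- context [INR (Factorial.fact ?n)] =>
    let v := eval vm_compute in (Z.of_nat (Factorial.fact n)) in
    replace (INR (Factorial.fact n)) with (IZR v)
      by (rewrite INR_IZR_INZ; f_equal; vm_compute; reflexivity)
  end.

Lemma d2pow_ext h m F G x : (forall y, F y = G y) -> d2pow h m F x = d2pow h m G x.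
Proof.
  intros H; revert x; induction m as [|m IH]; intros x; simpl; [apply H|].
  unfold d2; rewrite !IH; reflexivity.
Qed.

Lemma d2pow_lin h m a b F G x :
  d2pow h m (fun y => a * F y + b * G y) x = a * d2pow h m F x + b * d2pow h m G x.
Proof.
  revert x; induction m as [|m IH]; intros x; simpl; [reflexivity|].
  unfold d2; rewrite !IH; ring.
Qed.

Lemma d2pow_add h m k F x : d2pow h m (d2pow h k F) x = d2pow h (m + k) F x.
Proof.
  revert x; induction m as [|m IH]; intros x; simpl; [reflexivity|].
  unfold d2; rewrite !IH; reflexivity.
Qed.

Lemma d2pow_bound h m F B : (forall y, Rabs (F y) <= B) ->
  forall x, Rabs (d2pow h m F x) <= 4 ^ m * B.
Proof.
  intros H; induction m as [|m IH]; intros x; simpl; [rewrite Rmult_1_l; apply H|].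
  unfold d2.
  assert (H1 := IH (x + h)); assert (H2 := IH x); assert (H3 := IH (x - h)).
  apply Rabs_le_between in H1, H2, H3; apply Rabs_le_between; lra.
Qed.

(* Rewrites each argument of [F] into the ring-equal one used on the right-hand side,
   turning stencil identities into ring identities. *)
Ltac merge_args F :=
  lazymatch goal with |- _ = ?rhs =>
  repeat match goal with
  | |- context [F ?t] =>
      lazymatch rhs with context [F t] => fail | _ => idtac end;
      match rhs with context [F ?s] => replace (F t) with (F s) by (f_equal; ring) end
  end end.

Lemma d2pow_2 h F y : d2pow h 2 F y =
  F (y + 2 * h) - 4 * F (y + h) + 6 * F y - 4 * F (y - h) + F (y - 2 * h).
Proof. simpl; unfold d2; merge_args F; ring. Qed.

Lemma d2pow_3 h F y : d2pow h 3 F y =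
  F (y + 3 * h) - 6 * F (y + 2 * h) + 15 * F (y + h) - 20 * F y
  + 15 * F (y - h) - 6 * F (y - 2 * h) + F (y - 3 * h).
Proof. simpl; unfold d2; merge_args F; ring. Qed.

Lemma L1_numerator h f y : d2 h (fun z => f z - / 12 * d2 h f z) y =
  - / 12 * f (y + 2 * h) + 4 / 3 * f (y + h) - 5 / 2 * f y
  + 4 / 3 * f (y - h) - / 12 * f (y - 2 * h).
Proof. unfold d2; merge_args f; field. Qed.

Lemma L2_numerator h f y :
  d2 h (fun z => f z - / 12 * d2 h f z + / 90 * d2pow h 2 f z) y =
  / 90 * f (y + 3 * h) - 3 / 20 * f (y + 2 * h) + 3 / 2 * f (y + h) - 49 / 18 * f y
  + 3 / 2 * f (y - h) - 3 / 20 * f (y - 2 * h) + / 90 * f (y - 3 * h).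
Proof. cbn [d2pow]; unfold d2; merge_args f; field. Qed.

Lemma L1_residual f M h y : smooth f -> (forall x, Rabs (Derive_n f 8 x) <= M) -> 0 < h ->
  Rabs (d2 h (fun z => f z - / 12 * d2 h f z) y
        - (h ^ 2 * Derive_n f 2 y - 1 / 90 * d2pow h 2 (fun z => h ^ 2 * Derive_n f 2 z) y))
  <= 50 * M * h ^ 8.
Proof.
  intros Hf HM Hh.
  assert (HM2 : forall x, Rabs (Derive_n (Derive_n f 2) 6 x) <= M)
    by (intros x; rewrite Derive_n_comp; apply HM).
  rewrite L1_numerator, d2pow_2.
  destruct (taylor_expansion_pm f 7 M y h Hf HM) as (r1 & s1 & -> & -> & Hr1 & Hs1).
  destruct (taylor_expansion_pm f 7 M y (2 * h) Hf HM) as (r2 & s2 & -> & -> & Hr2 & Hs2).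
  destruct (taylor_expansion_pm _ 5 M y h (smooth_Derive_n f 2 Hf) HM2)
    as (p1 & q1 & -> & -> & Hp1 & Hq1).
  destruct (taylor_expansion_pm _ 5 M y (2 * h) (smooth_Derive_n f 2 Hf) HM2)
    as (p2 & q2 & -> & -> & Hp2 & Hq2).
  rewrite (Rabs_pos_eq h), (Rabs_pos_eq (2 * h)) in * by lra.
  unfold taylor_poly; cbn [sum_f_R0]; rewrite !Derive_n_comp; cbn [Nat.add].
  change (Derive_n f 0 y) with (f y).
  eval_factorials.
  (* The stencil is exact on polynomials of degree 7: only the remainders survive. *)
  match goal with |- Rabs ?E <= _ =>
    replace E with (4 / 3 * (r1 + s1) - / 12 * (r2 + s2)
                    + h ^ 2 / 90 * (p2 - 4 * p1 - 4 * q1 + q2)) by field end.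
  apply Rabs_le_between in Hr1, Hs1, Hr2, Hs2, Hp1, Hq1, Hp2, Hq2.
  apply Rabs_le_between; nra.
Qed.

Lemma L2_residual f M h y : smooth f -> (forall x, Rabs (Derive_n f 10 x) <= M) -> 0 < h ->
  Rabs (d2 h (fun z => f z - / 12 * d2 h f z + / 90 * d2pow h 2 f z) y
        - (h ^ 2 * Derive_n f 2 y
           - - (1 / 560) * d2pow h 3 (fun z => h ^ 2 * Derive_n f 2 z) y))
  <= 2000 * M * h ^ 10.
Proof.
  intros Hf HM Hh.
  assert (HM2 : forall x, Rabs (Derive_n (Derive_n f 2) 8 x) <= M)
    by (intros x; rewrite Derive_n_comp; apply HM).
  rewrite L2_numerator, d2pow_3.
  destruct (taylor_expansion_pm f 9 M y h Hf HM) as (r1 & s1 & -> & -> & Hr1 & Hs1).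
  destruct (taylor_expansion_pm f 9 M y (2 * h) Hf HM) as (r2 & s2 & -> & -> & Hr2 & Hs2).
  destruct (taylor_expansion_pm f 9 M y (3 * h) Hf HM) as (r3 & s3 & -> & -> & Hr3 & Hs3).
  destruct (taylor_expansion_pm _ 7 M y h (smooth_Derive_n f 2 Hf) HM2)
    as (p1 & q1 & -> & -> & Hp1 & Hq1).
  destruct (taylor_expansion_pm _ 7 M y (2 * h) (smooth_Derive_n f 2 Hf) HM2)
    as (p2 & q2 & -> & -> & Hp2 & Hq2).
  destruct (taylor_expansion_pm _ 7 M y (3 * h) (smooth_Derive_n f 2 Hf) HM2)
    as (p3 & q3 & -> & -> & Hp3 & Hq3).
  rewrite (Rabs_pos_eq h), (Rabs_pos_eq (2 * h)), (Rabs_pos_eq (3 * h)) in * by lra.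
  unfold taylor_poly; cbn [sum_f_R0]; rewrite !Derive_n_comp; cbn [Nat.add].
  change (Derive_n f 0 y) with (f y).
  eval_factorials.
  (* The stencil is exact on polynomials of degree 9: only the remainders survive. *)
  match goal with |- Rabs ?E <= _ =>
    replace E with (3 / 2 * (r1 + s1) - 3 / 20 * (r2 + s2) + / 90 * (r3 + s3)
                    - h ^ 2 / 560 * (15 * (p1 + q1) - 6 * (p2 + q2) + (p3 + q3))) by field end.
  apply Rabs_le_between in Hr1, Hs1, Hr2, Hs2, Hr3, Hs3, Hp1, Hq1, Hp2, Hq2, Hp3, Hq3.
  apply Rabs_le_between; nra.
Qed.

Section Neumann.

Variables (h : R) (k : nat) (a : R).
Hypothesis contraction : Rabs a * 4 ^ k < 1.

Let q := Rabs a * 4 ^ k.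

Lemma neumann_ratio_ge0 : 0 <= q.
Proof. apply Rmult_le_pos; [apply Rabs_pos | apply pow_le; lra]. Qed.

Lemma ex_series_geom_scal C : ex_series (fun n => C * q ^ n).
Proof.
  apply (ex_series_ext (fun n => q ^ n * C)); [intros; apply Rmult_comm|].
  apply ex_series_scal_r; eexists; apply is_series_geom.
  rewrite Rabs_pos_eq by apply neumann_ratio_ge0; exact contraction.
Qed.

Lemma neumann_term_le F C x : (forall y, Rabs (F y) <= C) ->
  forall n, Rabs (a ^ n * d2pow h (k * n) F x) <= C * q ^ n.
Proof.
  intros HF n.
  assert (Hb := d2pow_bound h (k * n) F C HF x); rewrite pow_mult in Hb.
  rewrite Rabs_mult, <- RPow_abs; unfold q; rewrite Rpow_mult_distr.
  assert (0 <= Rabs a ^ n) by (apply pow_le, Rabs_pos).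
  apply Rle_trans with (Rabs a ^ n * ((4 ^ k) ^ n * C)); [now apply Rmult_le_compat_l | lra].
Qed.

Lemma ex_series_neumann_abs F C x : (forall y, Rabs (F y) <= C) ->
  ex_series (fun n => Rabs (a ^ n * d2pow h (k * n) F x)).
Proof.
  intros HF.
  apply (ex_series_le (V := R_CompleteNormedModule)) with (fun n => C * q ^ n).
  - intros n; unfold norm; simpl; unfold abs; simpl.
    rewrite Rabs_Rabsolu; now apply neumann_term_le.
  - apply ex_series_geom_scal.
Qed.

Lemma ex_series_neumann F C x : (forall y, Rabs (F y) <= C) ->
  ex_series (fun n => a ^ n * d2pow h (k * n) F x).
Proof. intros HF; apply ex_series_Rabs; now apply (ex_series_neumann_abs F C). Qed.

Lemma Series_neumann_le F C x : (forall y, Rabs (F y) <= C) ->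
  Rabs (Series (fun n => a ^ n * d2pow h (k * n) F x)) <= C / (1 - q).
Proof.
  intros HF.
  eapply Rle_trans; [apply Series_Rabs; now apply (ex_series_neumann_abs F C)|].
  eapply Rle_trans.
  - apply Series_le with (b := fun n => C * q ^ n).
    + intros n; split; [apply Rabs_pos | now apply neumann_term_le].
    + apply ex_series_geom_scal.
  - rewrite Series_scal_l, Series_geom by (rewrite Rabs_pos_eq by apply neumann_ratio_ge0; exact contraction).
    apply Rle_refl.
Qed.

Lemma neumann_telescoping w r g x n : (forall y, g y = w y - a * d2pow h k w y + r y) ->
  a ^ n * d2pow h (k * n) g x =
  a ^ n * d2pow h (k * n) w x - a ^ S n * d2pow h (k * S n) w x
  + a ^ n * d2pow h (k * n) r x.
Proof.
  intros Hg.
  rewrite (d2pow_ext h (k * n) g (fun y => 1 * (1 * w y + - a * d2pow h k w y) + 1 * r y))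
    by (intros y; rewrite Hg; ring).
  rewrite !d2pow_lin, d2pow_add, Nat.mul_succ_r; simpl pow; ring.
Qed.

Lemma Series_neumann_approx w r g W B x :
  (forall y, Rabs (w y) <= W) -> (forall y, Rabs (r y) <= B) ->
  (forall y, g y = w y - a * d2pow h k w y + r y) ->
  Rabs (Series (fun n => a ^ n * d2pow h (k * n) g x) - w x) <= B / (1 - q).
Proof.
  intros Hw Hr Hg.
  set (T := fun n => a ^ n * d2pow h (k * n) w x).
  set (E := fun n => a ^ n * d2pow h (k * n) r x).
  assert (HT : ex_series T) by apply (ex_series_neumann w W x Hw).
  assert (HTS : ex_series (fun n => T (S n))) by exact (proj1 (ex_series_incr_1 T) HT).
  assert (HE : ex_series E) by apply (ex_series_neumann r B x Hr).
  assert (Htel : Series (fun n => a ^ n * d2pow h (k * n) g x) = w x + Series E).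
  { rewrite (Series_ext _ (fun n => (T n - T (S n)) + E n))
      by (intros n; apply (neumann_telescoping w r g x n Hg)).
    rewrite Series_plus, Series_minus, (Series_incr_1 T HT); auto.
    - replace (T 0%nat) with (w x) by (unfold T; rewrite Nat.mul_0_r; simpl; ring); ring.
    - apply (ex_series_ext (fun n => T n - T (S n))); [reflexivity|].
      apply (ex_series_minus (V := R_NormedModule)); assumption. }
  rewrite Htel; replace (w x + Series E - w x) with (Series E) by ring.
  now apply (Series_neumann_le r B x).
Qed.

End Neumann.

Lemma neumann_inverse_error h k a (D g : R -> R) M B x :
  0 < h -> Rabs a * 4 ^ k < 1 -> (forall y, Rabs (D y) <= M) ->
  (forall y, Rabs (g y - (h ^ 2 * D y - a * d2pow h k (fun z => h ^ 2 * D z) y)) <= B) ->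
  Rabs (D x - / h ^ 2 * Series (fun n => a ^ n * d2pow h (k * n) g x))
  <= B / h ^ 2 / (1 - Rabs a * 4 ^ k).
Proof.
  intros Hh Ha HD Hg.
  set (w := fun z => h ^ 2 * D z).
  assert (Hh2 : 0 < h ^ 2) by (apply pow_lt; lra).
  assert (Hw : forall y, Rabs (w y) <= h ^ 2 * M).
  { intros y; unfold w; rewrite Rabs_mult, Rabs_pos_eq by lra.
    now apply Rmult_le_compat_l; [lra|]. }
  assert (HS := Series_neumann_approx h k a Ha w
                  (fun y => g y - (w y - a * d2pow h k w y)) g (h ^ 2 * M) B x Hw Hg
                  ltac:(intros; cbv beta; ring)).
  replace (D x - / h ^ 2 * Series _)
    with (- / h ^ 2 * (Series (fun n => a ^ n * d2pow h (k * n) g x) - w x)) by (unfold w; field; lra).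
  rewrite Rabs_mult, Rabs_Ropp, Rabs_pos_eq by (apply Rlt_le, Rinv_0_lt_compat; lra).
  replace (B / h ^ 2 / (1 - Rabs a * 4 ^ k)) with (/ h ^ 2 * (B / (1 - Rabs a * 4 ^ k)))
    by (field; lra).
  now apply Rmult_le_compat_l; [apply Rlt_le, Rinv_0_lt_compat|].
Qed.

Lemma L1_consistency f M M2 h x : smooth f ->
  (forall y, Rabs (Derive_n f 8 y) <= M) -> (forall y, Rabs (Derive_n f 2 y) <= M2) -> 0 < h ->
  Rabs (Derive_n f 2 x - L1 h f x) <= 61 * M * h ^ 6.
Proof.
  intros Hf HM HM2 Hh; unfold L1, inv1.
  assert (0 <= M) by (eapply Rle_trans; [apply Rabs_pos | apply (HM 0)]).
  eapply Rle_trans.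
  - apply (neumann_inverse_error h 2 (1 / 90) _ _ M2 (50 * M * h ^ 8) x Hh);
      [rewrite Rabs_pos_eq; lra | exact HM2 | intros y; now apply L1_residual].
  - rewrite Rabs_pos_eq by lra.
    replace (50 * M * h ^ 8 / h ^ 2 / (1 - 1 / 90 * 4 ^ 2)) with (4500 / 74 * M * h ^ 6)
      by (field; lra).
    assert (0 <= h ^ 6) by (apply pow_le; lra).
    nra.
Qed.

Lemma L2_consistency f M M2 h x : smooth f ->
  (forall y, Rabs (Derive_n f 10 y) <= M) -> (forall y, Rabs (Derive_n f 2 y) <= M2) -> 0 < h ->
  Rabs (Derive_n f 2 x - L2 h f x) <= 2259 * M * h ^ 8.
Proof.
  intros Hf HM HM2 Hh; unfold L2, inv2.
  assert (0 <= M) by (eapply Rle_trans; [apply Rabs_pos | apply (HM 0)]).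
  eapply Rle_trans.
  - apply (neumann_inverse_error h 3 (- (1 / 560)) _ _ M2 (2000 * M * h ^ 10) x Hh);
      [rewrite Rabs_Ropp, Rabs_pos_eq; lra | exact HM2 | intros y; now apply L2_residual].
  - rewrite Rabs_Ropp, Rabs_pos_eq by lra.
    replace (2000 * M * h ^ 10 / h ^ 2 / (1 - 1 / 560 * 4 ^ 3)) with (1120000 / 496 * M * h ^ 8)
      by (field; lra).
    assert (0 <= h ^ 8) by (apply pow_le; lra).
    nra.
Qed.

Theorem lemma1 (u : R -> R -> R)
  (Hsmooth : forall (t : R) (n : nat) (x : R), ex_derive_n (fun y => u y t) n x)
  (Hbound : forall n : nat, exists M : R, forall x t : R,
      Rabs (Derive_n (fun y => u y t) n x) <= M) :
  (exists C h0 : R, 0 < h0 /\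
     forall h : R, 0 < h < h0 -> forall (j : Z) (t : R),
       Rabs (Derive_n (fun y => u y t) 2 (IZR j * h)
             - L1 h (fun y => u y t) (IZR j * h)) <= C * h ^ 6) /\
  (exists C h0 : R, 0 < h0 /\
     forall h : R, 0 < h < h0 -> forall (j : Z) (t : R),
       Rabs (Derive_n (fun y => u y t) 2 (IZR j * h)
             - L2 h (fun y => u y t) (IZR j * h)) <= C * h ^ 8).
Proof.
  destruct (Hbound 2%nat) as [M2 HM2].
  split.
  - destruct (Hbound 8%nat) as [M8 HM8].
    exists (61 * M8), 1; split; [lra|]; intros h [Hh _] j t.
    apply L1_consistency with M2; auto.
    intros n x; apply Hsmooth.
  - destruct (Hbound 10%nat) as [M10 HM10].
    exists (2259 * M10), 1; split; [lra|]; intros h [Hh _] j t.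
    apply L2_consistency with M2; auto.
    intros n x; apply Hsmooth.
Qed.
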